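(* Let $X\sim\mathbb{P}$ on a sample space $\mathcal{X}$, let $G$ be a compact topological group acting on $\mathcal{X}$ with Haar probability measure $\mathbb{Q}$ (exact invariance not assumed). Let $\hat\theta:\mathcal{X}\to\mathbb{R}^p$ be an estimator of $\theta_0\in\mathbb{R}^p$ such that $(x,g)\mapsto\hat\theta(gx)$ is in $L^2(\mathbb{P}\times\mathbb{Q})$, let $\hat\theta_G(X)=\mathbb{E}_{g\sim\mathbb{Q}}\hat\theta(gX)$, and let $\|\hat\theta\|_\infty=\sup_x\|\hat\theta(x)\|_2$. Then $$\big|\mathrm{MSE}(\hat\theta_G)-\mathrm{MSE}(\hat\theta)+\mathbb{E}_X\operatorname{tr}(\mathrm{Cov}_g\hat\theta(gX))\big|\le\Delta,$$ where $$\Delta=\mathbb{E}_g\mathcal{W}_1(\hat\theta(gX),\hat\theta(X))\cdot\Big[\mathbb{E}_g\mathcal{W}_1(\hat\theta(gX),\hat\theta(X))+2\|\mathrm{Bias}(\hat\theta(X))\|_2+4\|\hat\theta\|_\infty\Big].$$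
   Context: $\mathrm{MSE}(T)=\mathbb{E}\|T(X)-\theta_0\|_2^2$ and $\mathrm{Bias}(T(X))=\mathbb{E}T(X)-\theta_0$. For fixed $g$, $\mathcal{W}_1(\hat\theta(gX),\hat\theta(X))$ is the Wasserstein-1 distance (with respect to the Euclidean metric) between the laws of $\hat\theta(gX)$ and $\hat\theta(X)$, $X\sim\mathbb{P}$; $\mathbb{E}_g$, $\mathrm{Cov}_g$ are over $g\sim\mathbb{Q}$. *)

From HB Require Import structures.
From mathcomp Require Import all_boot all_order all_algebra.
From mathcomp Require Import all_classical all_reals all_analysis.
Set Implicit Arguments.
Unset Strict Implicit.
Unset Printing Implicit Defensive.
Import Order.TTheory GRing.Theory Num.Theory.
Local Open Scope classical_set_scope.
Local Open Scope ring_scope.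

(* R^p is represented by p.-tuple R, equipped with the library's product
   sigma-algebra on tuples (= Borel sigma-algebra of R^p).  *)

Section Defs.
Context {R : realType} {p : nat}.

Definition norm2 (v : p.-tuple R) : R := Num.sqrt (\sum_(i < p) (tnth v i) ^+ 2).

Definition dist2 (u v : p.-tuple R) : R :=
  Num.sqrt (\sum_(i < p) (tnth u i - tnth v i) ^+ 2).

Definition is_coupling {d} {T : measurableType d} (P : probability T R)
    (f1 f2 : T -> p.-tuple R) (pi : probability (p.-tuple R * p.-tuple R)%type R) : Prop :=
  (forall A : set (p.-tuple R), measurable A ->
      pi (A `*` [set: p.-tuple R]) = P (f1 @^-1` A)) /\
  (forall B : set (p.-tuple R), measurable B ->
      pi ([set: p.-tuple R] `*` B) = P (f2 @^-1` B)).

Definition W1 {d} {T : measurableType d} (P : probability T R)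
    (f1 f2 : T -> p.-tuple R) : \bar R :=
  ereal_inf [set (\int[pi]_yz (dist2 yz.1 yz.2)%:E)%E |
             pi in [set pi | is_coupling P f1 f2 pi]].

Definition MSE {d} {T : measurableType d} (P : probability T R)
    (est : T -> p.-tuple R) (theta0 : p.-tuple R) : \bar R :=
  (\int[P]_x ((dist2 (est x) theta0) ^+ 2)%:E)%E.

Definition bias {d} {T : measurableType d} (P : probability T R)
    (est : T -> p.-tuple R) (theta0 : p.-tuple R) : p.-tuple R :=
  [tuple (\int[P]_x tnth (est x) i)%R - tnth theta0 i | i < p].

Definition supnorm {T : Type} (est : T -> p.-tuple R) : \bar R :=
  ereal_sup [set (norm2 (est x))%:E | x in [set: T]].

Definition meanv {d} {T : measurableType d} (Q : probability T R)
    (f : T -> p.-tuple R) : p.-tuple R :=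
  [tuple (\int[Q]_g tnth (f g) i)%R | i < p].

Definition covm {d} {T : measurableType d} (Q : probability T R)
    (f : T -> p.-tuple R) : 'M[R]_p :=
  \matrix_(i < p, j < p)
    (\int[Q]_g ((tnth (f g) i - tnth (meanv Q f) i) *
                (tnth (f g) j - tnth (meanv Q f) j)))%R.

End Defs.

Definition topological_group (G : ptopologicalType)
    (mul : G -> G -> G) (inv : G -> G) (one : G) : Prop :=
  [/\ (forall a b c, mul a (mul b c) = mul (mul a b) c),
      (forall a, mul one a = a /\ mul a one = a),
      (forall a, mul (inv a) a = one /\ mul a (inv a) = one),
      continuous (fun ab : G * G => mul ab.1 ab.2) &
      continuous inv].

Notation borelT G := (g_sigma_algebraType (@open G)).

Definition haar_probability (R : realType) (G : ptopologicalType)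
    (mul : G -> G -> G) (Q : probability (borelT G) R) : Prop :=
  forall (g : G) (A : set (borelT G)), measurable A ->
    Q ((mul g) @^-1` A) = Q A.

Definition group_action (G X : Type) (mul : G -> G -> G) (one : G)
    (act : G -> X -> X) : Prop :=
  (forall x, act one x = x) /\
  (forall g h x, act (mul g h) x = act g (act h x)).

From HB Require Import structures.
From mathcomp Require Import all_boot all_order all_algebra.
From mathcomp Require Import all_classical all_reals all_analysis.
From mathcomp Require Import ring lra measurable_realfun.
Import Order.TTheory GRing.Theory Num.Theory.
Local Open Scope classical_set_scope.
Local Open Scope ring_scope.

(* Write f(y) = |y - theta0|^2 and m(g) = E_X f(theta(gX)). The bias-variance
   identity, applied for each x to g |-> theta(gx) and integrated in x (Tonelli),
   gives MSE(theta_G) + E_X tr Cov_g theta(gX) = E_g m(g), so the left-hand side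
   is |E_g m(g) - MSE(theta)|.
   If s = |theta|_oo is finite, every value of theta lies in the ball of radius
   T = s + |theta0| around theta0, on which f agrees with the 2T-Lipschitz map
   min(|y - theta0|, T)^2; integrating the Lipschitz bound against a coupling
   gives |m(g) - MSE(theta)| <= 2T W1(theta(gX), theta(X)).  Finally
   |theta0| <= |Bias| + s because |E theta(X)| <= s.
   If s = +oo the bound is +oo unless E_g W1 = 0; then W1 vanishes for a.e. g,
   and the same estimate for the truncations min(|y - theta0|, n)^2, with
   n -> oo by monotone convergence, gives m(g) = MSE(theta) for a.e. g. *)

Section sum_of_squares.
Context {R : rcfType} {p : nat}.
Implicit Types (a b : 'I_p -> R).

Lemma sumsq_ge0 a : 0 <= \sum_i a i ^+ 2.
Proof. by apply: sumr_ge0 => i _; exact: sqr_ge0. Qed.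

Lemma sqr_sqrt_sumsq a : Num.sqrt (\sum_i a i ^+ 2) ^+ 2 = \sum_i a i ^+ 2.
Proof. by rewrite sqr_sqrtr // sumsq_ge0. Qed.

Lemma sumsq_eq0 a : \sum_i a i ^+ 2 = 0 -> forall i, a i = 0.
Proof.
move=> /eqP; rewrite psumr_eq0 => [/allP a0 i|i _]; last exact: sqr_ge0.
by apply/eqP; rewrite -sqrf_eq0; apply: a0; rewrite mem_index_enum.
Qed.

Lemma cauchy_schwarz_sum a b :
  \sum_i a i * b i <= Num.sqrt (\sum_i a i ^+ 2) * Num.sqrt (\sum_i b i ^+ 2).
Proof.
set A := Num.sqrt _; set B := Num.sqrt _.
have [A0|A_neq0] := eqVneq A 0.
  have /sumsq_eq0 a0 : \sum_i a i ^+ 2 = 0 by rewrite -sqr_sqrt_sumsq -/A A0 expr0n.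
  by rewrite A0 mul0r big1 // => i _; rewrite a0 mul0r.
have [B0|B_neq0] := eqVneq B 0.
  have /sumsq_eq0 b0 : \sum_i b i ^+ 2 = 0 by rewrite -sqr_sqrt_sumsq -/B B0 expr0n.
  by rewrite B0 mulr0 big1 // => i _; rewrite b0 mulr0.
have AB_gt0 : 0 < A * B by rewrite mulr_gt0 // lt0r ?A_neq0 ?B_neq0 ?sqrtr_ge0.
have expand : \sum_i (B * a i - A * b i) ^+ 2 =
    B ^+ 2 * (\sum_i a i ^+ 2) - 2 * (A * B) * (\sum_i a i * b i)
    + A ^+ 2 * (\sum_i b i ^+ 2).
  by rewrite !mulr_sumr -sumrB -big_split /=; apply: eq_bigr => i _; ring.
have := sumsq_ge0 (fun i => B * a i - A * b i).
rewrite expand -[\sum_i a i ^+ 2]sqr_sqrt_sumsq -[\sum_i b i ^+ 2]sqr_sqrt_sumsq -/A -/B.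
move=> ge0; rewrite -(ler_pM2l AB_gt0); nra.
Qed.

Lemma minkowski_sum a b :
  Num.sqrt (\sum_i (a i + b i) ^+ 2) <=
  Num.sqrt (\sum_i a i ^+ 2) + Num.sqrt (\sum_i b i ^+ 2).
Proof.
set A := Num.sqrt (\sum_i a i ^+ 2); set B := Num.sqrt (\sum_i b i ^+ 2).
have A0 : 0 <= A by exact: sqrtr_ge0.
have B0 : 0 <= B by exact: sqrtr_ge0.
rewrite -(ger0_norm (addr_ge0 A0 B0)) -sqrtr_sqr ler_sqrt ?sqr_ge0 //.
have -> : \sum_i (a i + b i) ^+ 2 =
    \sum_i a i ^+ 2 + 2 * (\sum_i a i * b i) + \sum_i b i ^+ 2.
  by rewrite mulr_sumr -!big_split /=; apply: eq_bigr => i _; ring.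
have := cauchy_schwarz_sum a b; rewrite -/A -/B.
rewrite -[\sum_i a i ^+ 2]sqr_sqrt_sumsq -[\sum_i b i ^+ 2]sqr_sqrt_sumsq -/A -/B.
nra.
Qed.

Lemma ler_norm_sqrt_sumsq a i : `|a i| <= Num.sqrt (\sum_j a j ^+ 2).
Proof.
rewrite -sqrtr_sqr ler_sqrt ?sumsq_ge0 // (bigD1 i) //= lerDl.
by apply: sumr_ge0 => j _; exact: sqr_ge0.
Qed.

End sum_of_squares.

Section euclidean.
Context {R : realType} {p : nat}.
Implicit Types (u v w c : p.-tuple R).

Lemma norm2_ge0 u : 0 <= norm2 u.
Proof. exact: sqrtr_ge0. Qed.

Lemma dist2_ge0 u v : 0 <= dist2 u v.
Proof. exact: sqrtr_ge0. Qed.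

Lemma sqr_dist2 u v : dist2 u v ^+ 2 = \sum_i (tnth u i - tnth v i) ^+ 2.
Proof. exact: (sqr_sqrt_sumsq (fun i => tnth u i - tnth v i)). Qed.

Lemma dist2C u v : dist2 u v = dist2 v u.
Proof. by rewrite /dist2; congr Num.sqrt; apply: eq_bigr => i _; rewrite -sqrrN opprB. Qed.

Lemma dist2_0 u : dist2 u [tuple 0 | _ < p] = norm2 u.
Proof. by rewrite /dist2 /norm2; under eq_bigr do rewrite tnth_mktuple subr0. Qed.

Lemma dist2_triangle u v w : dist2 u w <= dist2 u v + dist2 v w.
Proof.
have := minkowski_sum (fun i => tnth u i - tnth v i) (fun i => tnth v i - tnth w i).
by under eq_bigr do rewrite addrA subrK.
Qed.

Lemma dist2_le_norm2D u v : dist2 u v <= norm2 u + norm2 v.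
Proof.
have sqrN : \sum_i (- tnth v i) ^+ 2 = \sum_i tnth v i ^+ 2.
  by under eq_bigr do rewrite sqrrN.
by have := minkowski_sum (fun i => tnth u i) (fun i => - tnth v i); rewrite sqrN.
Qed.

Lemma norm2_le_dist2D u v : norm2 u <= dist2 u v + norm2 v.
Proof.
have := minkowski_sum (fun i => tnth u i - tnth v i) (fun i => tnth v i).
by under eq_bigr do rewrite subrK.
Qed.

Lemma ler_norm_tnth u i : `|tnth u i| <= norm2 u.
Proof. exact: (ler_norm_sqrt_sumsq (fun i => tnth u i)). Qed.

Lemma measurable_dist2 d (T : measurableType d) (f g : T -> p.-tuple R) :
  measurable_fun setT f -> measurable_fun setT g ->
  measurable_fun setT (fun x => dist2 (f x) (g x)).
Proof.
move=> mf mg; apply: (measurableT_comp (continuous_measurable_fun (@sqrt_continuous R))).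
apply: measurable_sum => i; apply: measurable_funX; apply: measurable_funB.
  exact: (measurableT_comp (measurable_tnth i) mf).
exact: (measurableT_comp (measurable_tnth i) mg).
Qed.

End euclidean.

Section truncated_squared_distance.
Context {R : realType} {p : nat}.
Implicit Types (c y z : p.-tuple R) (t : R).

Definition sqdist_trunc c t y : R := Num.min (dist2 y c) t ^+ 2.

Lemma sqdist_trunc_ge0 c t y : 0 <= sqdist_trunc c t y.
Proof. exact: sqr_ge0. Qed.

Lemma sqdist_truncE c t y : dist2 y c <= t -> sqdist_trunc c t y = dist2 y c ^+ 2.
Proof. by move=> yt; rewrite /sqdist_trunc min_l. Qed.

Lemma sqdist_trunc_le c t y : 0 <= t -> sqdist_trunc c t y <= t ^+ 2.
Proof.
move=> t0; apply: lerXn2r; rewrite ?nnegrE ?ge_min ?lexx ?orbT //.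
by rewrite le_min dist2_ge0.
Qed.

Lemma le_sqdist_trunc c t1 t2 y : 0 <= t1 <= t2 ->
  sqdist_trunc c t1 y <= sqdist_trunc c t2 y.
Proof.
move=> /andP[t10 t12].
have min_ge0 t : 0 <= t -> 0 <= Num.min (dist2 y c) t by rewrite le_min dist2_ge0.
apply: lerXn2r; rewrite ?nnegrE ?min_ge0 //; first exact: le_trans t12.
by rewrite le_min !ge_min lexx t12 orbT.
Qed.

Lemma ler_normB_min (a b t : R) : `|Num.min a t - Num.min b t| <= `|a - b|.
Proof.
have ab_le := ler_norm (a - b).
have ba_le : b - a <= `|a - b| by rewrite -normrN opprB ler_norm.
rewrite ler_norml.
case: (leP a t) => ha; case: (leP b t) => hb;
  rewrite ?(min_l ha) ?(min_r (ltW ha)) ?(min_l hb) ?(min_r (ltW hb));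
  apply/andP; split; lra.
Qed.

Lemma sqdist_trunc_lipschitz c t y z : 0 <= t ->
  `|sqdist_trunc c t y - sqdist_trunc c t z| <= 2 * t * dist2 y z.
Proof.
move=> t0; rewrite /sqdist_trunc.
set A := Num.min (dist2 y c) t; set B := Num.min (dist2 z c) t.
have A0 : 0 <= A by rewrite le_min dist2_ge0.
have B0 : 0 <= B by rewrite le_min dist2_ge0.
have [At Bt] : A <= t /\ B <= t by rewrite !ge_min lexx !orbT.
have AB : `|A - B| <= dist2 y z.
  apply: le_trans (ler_normB_min _ _ _) _; rewrite ler_norml.
  have := dist2_triangle y z c; have := dist2_triangle z y c; rewrite (dist2C z y).
  move=> *; apply/andP; split; lra.
rewrite subr_sqr normrM (ger0_norm (addr_ge0 A0 B0)) [2 * t * _]mulrC.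
by apply: ler_pM => //; [exact: addr_ge0 | lra].
Qed.

Lemma measurable_sqdist_trunc c t : measurable_fun setT (sqdist_trunc c t).
Proof.
apply: measurable_funX; apply: measurable_minr => //.
exact: (@measurable_dist2 R p _ _ id (fun=> c)).
Qed.

End truncated_squared_distance.

Section integrability.
Local Open Scope ereal_scope.
Context {R : realType} {d} {T : measurableType d} (mu : {finite_measure set T -> \bar R}).

Lemma integrable_le_affine (f g : T -> R) (a b : R) :
  measurable_fun setT f -> mu.-integrable setT (EFin \o g) ->
  (forall x, `|f x| <= a + b * g x)%R -> mu.-integrable setT (EFin \o f).
Proof.
move=> mf ig fg.
have iab : mu.-integrable setT (EFin \o (fun x => a + b * g x)%R).
  apply: (eq_integrable _ (cst a%:E \+ (fun x => b%:E * (g x)%:E))) => //.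
  apply: integrableD => //; last exact: integrableZl.
  exact: finite_measure_integrable_cst.
apply: le_integrable iab => //; first exact/measurable_EFinP.
by move=> x _ /=; rewrite lee_fin (le_trans (fg x)) // ler_norm.
Qed.

Lemma bounded_integrable (f : T -> R) (M : R) :
  measurable_fun setT f -> (forall x, `|f x| <= M)%R -> mu.-integrable setT (EFin \o f).
Proof.
move=> mf fM; apply: (@integrable_le_affine f (cst 0%R) M 0) => // [|x].
  exact: finite_measure_integrable_cst.
by rewrite mul0r addr0.
Qed.

End integrability.

Section square_integrable.
Context {R : realType} {p : nat} {d} {T : measurableType d}.
Context {mu : {finite_measure set T -> \bar R}} {w : T -> p.-tuple R}.
Hypothesis mw : measurable_fun setT w.
Hypothesis iw : mu.-integrable setT (fun x => (norm2 (w x) ^+ 2)%:E).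

Lemma measurable_tnth_fun i : measurable_fun setT (fun x => tnth (w x) i).
Proof. exact: (measurableT_comp (measurable_tnth i) mw). Qed.

Lemma integrable_tnth i : mu.-integrable setT (EFin \o (fun x => tnth (w x) i)).
Proof.
apply: (@integrable_le_affine _ _ _ mu _ (fun x => norm2 (w x) ^+ 2) 1 1) => //.
  exact: measurable_tnth_fun.
move=> x; have := ler_norm_tnth (w x) i; have := normr_ge0 (tnth (w x) i).
by rewrite mul1r; nra.
Qed.

Lemma integrable_sqr_tnth i :
  mu.-integrable setT (EFin \o (fun x => tnth (w x) i ^+ 2)).
Proof.
apply: (@integrable_le_affine _ _ _ mu _ (fun x => norm2 (w x) ^+ 2) 0 1) => //.
  by apply: measurable_funX; exact: measurable_tnth_fun.
move=> x; rewrite add0r mul1r normrX; apply: lerXn2r; rewrite ?nnegrE //.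
  exact: norm2_ge0.
exact: ler_norm_tnth.
Qed.

Lemma integrable_sqr_dist2 c :
  mu.-integrable setT (fun x => (dist2 (w x) c ^+ 2)%:E).
Proof.
apply: (@integrable_le_affine _ _ _ mu _ (fun x => norm2 (w x) ^+ 2)
  (2 * norm2 c ^+ 2) 2) => //.
  by apply: measurable_funX; exact: measurable_dist2.
move=> x; rewrite ger0_norm ?sqr_ge0 //.
have := sqr_ge0 (norm2 (w x) - norm2 c).
have : dist2 (w x) c ^+ 2 <= (norm2 (w x) + norm2 c) ^+ 2.
  by rewrite lerXn2r ?nnegrE ?addr_ge0 ?dist2_ge0 ?norm2_ge0 ?dist2_le_norm2D.
nra.
Qed.

End square_integrable.

Section bias_variance.
Context {R : realType} {d} {Y : measurableType d} (Q : probability Y R).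

Section scalar.
Variable w : Y -> R.
Hypotheses (iw : Q.-integrable setT (EFin \o w))
  (iw2 : Q.-integrable setT (EFin \o (fun g => w g ^+ 2))).

Lemma Rintegral_mulBB a b : \int[Q]_g ((w g - a) * (w g - b)) =
  \int[Q]_g (w g ^+ 2) - (a + b) * \int[Q]_g w g + a * b.
Proof.
have icst k : Q.-integrable setT (EFin \o cst k) by exact: finite_measure_integrable_cst.
have iaff : Q.-integrable setT (EFin \o (fun g => - (a + b) * w g)).
  by apply: (eq_integrable _ (fun g => (- (a + b))%:E * (w g)%:E)%E) => //;
     exact: integrableZl.
transitivity (\int[Q]_g (w g ^+ 2 + (- (a + b) * w g + a * b))).
  by apply: eq_Rintegral => g _; ring.
rewrite RintegralD //; last first.
  apply: (eq_integrable _ ((EFin \o (fun g => - (a + b) * w g)) \+ (EFin \o cst (a * b))))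
    => //.
  exact: integrableD.
rewrite RintegralD //; last exact: icst.
rewrite RintegralZl // Rintegral_cst // (congr1 fine (probability_setT Q)) mulr1.
ring.
Qed.

Lemma Rintegral_sqrB c : \int[Q]_g ((w g - c) ^+ 2) =
  (\int[Q]_g w g - c) ^+ 2 +
  \int[Q]_g ((w g - \int[Q]_h w h) * (w g - \int[Q]_h w h)).
Proof.
under eq_Rintegral do rewrite expr2.
by rewrite !Rintegral_mulBB; ring.
Qed.

End scalar.

Context {p : nat}.
Implicit Types (w : Y -> p.-tuple R) (c : p.-tuple R).

Lemma trace_covm_ge0 w : 0 <= \tr (covm Q w).
Proof.
rewrite /mxtrace; apply: sumr_ge0 => i _; rewrite mxE.
by apply: Rintegral_ge0 => g _; rewrite -expr2 sqr_ge0.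
Qed.

Lemma bias_variance w c : measurable_fun setT w ->
  Q.-integrable setT (fun g => (norm2 (w g) ^+ 2)%:E) ->
  ((dist2 (meanv Q w) c ^+ 2 + \tr (covm Q w))%:E =
   \int[Q]_g (dist2 (w g) c ^+ 2)%:E)%E.
Proof.
move=> mw iw.
have iw1 := integrable_tnth mw iw; have iw2 := integrable_sqr_tnth mw iw.
have iq i : Q.-integrable setT (fun g => ((tnth (w g) i - tnth c i) ^+ 2)%:E).
  apply: (@integrable_le_affine _ _ _ Q _ _ (2 * tnth c i ^+ 2) 2 _ (iw2 i)).
    by apply: measurable_funX; apply: measurable_funB => //; exact: measurable_tnth_fun.
  move=> g; rewrite ger0_norm ?sqr_ge0 //.
  have := sqr_ge0 (tnth (w g) i + tnth c i); nra.
under eq_integral do rewrite sqr_dist2 -sumEFin.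
rewrite integral_sum //.
under eq_bigr => i _ do rewrite -(fineK (integrable_fin_num _ (iq i))) //.
rewrite sumEFin sqr_dist2 /mxtrace -big_split /=; congr EFin.
apply: eq_bigr => i _; rewrite /meanv mxE !tnth_mktuple.
by rewrite [RHS](Rintegral_sqrB _ (iw1 i) (iw2 i)).
Qed.

Lemma norm2_meanv_le w (s : R) : measurable_fun setT w ->
  (forall g, norm2 (w g) <= s) -> norm2 (meanv Q w) <= s.
Proof.
(* Jensen's inequality, read off the bias-variance identity at [c = 0]. *)
move=> mw ws; have s0 : 0 <= s := le_trans (norm2_ge0 _) (ws point).
have mn : measurable_fun setT (fun g => norm2 (w g)).
  by under eq_fun do rewrite -dist2_0; exact: measurable_dist2.
have wss g : `|norm2 (w g) ^+ 2| <= s ^+ 2.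
  by rewrite ger0_norm ?sqr_ge0 // lerXn2r ?nnegrE ?norm2_ge0.
have iw := bounded_integrable Q _ _ (measurable_funX 2 mn) wss.
have := @bias_variance w [tuple (0 : R) | _ < p] mw iw.
under [X in _ = X -> _]eq_integral do rewrite dist2_0.
rewrite dist2_0 => decomp.
have : ((norm2 (meanv Q w) ^+ 2 + \tr (covm Q w))%:E <= (s ^+ 2)%:E)%E.
  rewrite decomp; apply: le_trans (_ : _ <= \int[Q]_g (s ^+ 2)%:E)%E _.
    apply: ge0_le_integral => //; first by move=> g _; rewrite lee_fin sqr_ge0.
      by apply/measurable_EFinP; exact: measurable_funX.
    by move=> g _; rewrite lee_fin -(ger0_norm (sqr_ge0 (norm2 (w g)))) wss.
  by rewrite integral_cst // [X in (_ * X)%E](probability_setT Q) mule1.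
rewrite lee_fin; have := trace_covm_ge0 w; have := norm2_ge0 (meanv Q w); nra.
Qed.

Lemma norm2_bias (f : Y -> p.-tuple R) c : norm2 (bias Q f c) = dist2 (meanv Q f) c.
Proof.
by rewrite /norm2 /dist2; congr Num.sqrt; apply: eq_bigr => i _; rewrite !tnth_mktuple.
Qed.

Lemma norm2_le_bias_add (f : Y -> p.-tuple R) c (s : R) : measurable_fun setT f ->
  (forall y, norm2 (f y) <= s) -> norm2 c <= norm2 (bias Q f c) + s.
Proof.
move=> mf fs; rewrite norm2_bias dist2C.
apply: le_trans (norm2_le_dist2D c (meanv Q f)) _.
by rewrite lerD2l; exact: norm2_meanv_le.
Qed.

End bias_variance.

Section MSE_truncation.
Local Open Scope ereal_scope.
Context {R : realType} {p : nat} {d} {T : measurableType d} (P : probability T R).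
Implicit Types (f : T -> p.-tuple R) (c : p.-tuple R).

Lemma MSE_sqdist_truncE f c (t : R) : (forall x, (dist2 (f x) c <= t)%R) ->
  MSE P f c = \int[P]_x (sqdist_trunc c t (f x))%:E.
Proof. by move=> ft; apply: eq_integral => x _; rewrite sqdist_truncE. Qed.

Lemma MSE_limn f c : measurable_fun setT f ->
  MSE P f c = limn (fun n => \int[P]_x (sqdist_trunc c n%:R (f x))%:E).
Proof.
move=> mf; rewrite -monotone_convergence //; first last.
- by move=> x _ m n mn; rewrite lee_fin le_sqdist_trunc // ler0n ler_nat.
- by move=> n x _; rewrite lee_fin sqdist_trunc_ge0.
- by move=> n; apply/measurable_EFinP; exact: measurableT_comp (measurable_sqdist_trunc _ _) mf.
apply: eq_integral => x _; apply/esym/cvg_lim => //; apply: cvg_near_cst.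
near=> n; rewrite sqdist_truncE //.
near: n; exists (Num.bound (dist2 (f x) c)) => // n /= n_ge.
by apply: le_trans (ltW (archi_boundP (dist2_ge0 _ _))) _; rewrite ler_nat.
Unshelve. all: by end_near.
Qed.

End MSE_truncation.

(* [f] need not be measurable: below it is [g |-> W1 P (F^~ g) theta],
   whose measurability is not known. *)
Lemma ge0_integral_le_scale {R : realType} d (T : measurableType d)
    (mu : {measure set T -> \bar R}) (k f : T -> \bar R) (a : R) :
  (0 <= a)%R -> measurable_fun setT k -> (forall x, 0 <= k x)%E ->
  (forall x, k x <= a%:E * f x)%E ->
  (\int[mu]_x k x <= a%:E * \int[mu]_x f x)%E.
Proof.
move=> a0 mk k0 kf.
have [a_eq0|a_neq0] := eqVneq a 0%R.
  rewrite a_eq0 in kf *; rewrite mul0e (eq_integral (cst 0%E)) ?integral0 // => x _.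
  by apply/eqP; rewrite eq_le k0 andbT; have := kf x; rewrite mul0e.
have a_gt0 : (0 < a)%R by rewrite lt0r a_neq0.
have f0 x : (0 <= f x)%E by rewrite -(@lee_pmul2l _ a%:E) ?lte_fin // mule0 (le_trans (k0 x)).
have -> : (\int[mu]_x k x = a%:E * \int[mu]_x (a^-1%:E * k x))%E.
  rewrite ge0_integralZl //; last by rewrite lee_fin invr_ge0.
  by rewrite muleA -EFinM divff // mul1e.
rewrite lee_pmul2l ?lte_fin // !ge0_integralTE // => [|x]; last first.
  by rewrite mule_ge0 // lee_fin invr_ge0.
apply: ereal_sup_le => _ [s sk <-]; exists s => // x; apply: le_trans (sk x) _.
by rewrite -(@lee_pmul2l _ a%:E) ?lte_fin // muleA -EFinM divff // mul1e.
Qed.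

Section coupling.
Local Open Scope ereal_scope.
Context {R : realType} {p : nat} {d} {T : measurableType d} (P : probability T R).
Variables (f1 f2 : T -> p.-tuple R).
Hypotheses (mf1 : measurable_fun setT f1) (mf2 : measurable_fun setT f2).

Lemma W1_ge0 : 0 <= W1 P f1 f2.
Proof.
apply: le_ereal_inf_tmp => _ [pi _ <-]; apply: integral_ge0 => yz _.
by rewrite lee_fin dist2_ge0.
Qed.

Section marginals.
Variable pi : probability (p.-tuple R * p.-tuple R)%type R.
Hypothesis pi_coupling : is_coupling P f1 f2 pi.
Context {phi : p.-tuple R -> (\bar R)}.
Hypotheses (mphi : measurable_fun setT phi) (phi_ge0 : forall y, 0 <= phi y).

Lemma coupling_integral_fst : \int[pi]_yz phi yz.1 = \int[P]_x phi (f1 x).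
Proof.
have := ge0_integral_pushforward measurable_fst pi measurableT mphi (fun y _ => phi_ge0 y).
have := ge0_integral_pushforward mf1 P measurableT mphi (fun y _ => phi_ge0 y).
rewrite !preimage_setT => <- <-; apply: eq_measure_integral => A mA _.
change (pi (fst @^-1` A) = P (f1 @^-1` A)).
rewrite -pi_coupling.1 //; congr (pi _).
by apply/seteqP; split => [yz|[y z] []].
Qed.

Lemma coupling_integral_snd : \int[pi]_yz phi yz.2 = \int[P]_x phi (f2 x).
Proof.
have := ge0_integral_pushforward measurable_snd pi measurableT mphi (fun y _ => phi_ge0 y).
have := ge0_integral_pushforward mf2 P measurableT mphi (fun y _ => phi_ge0 y).
rewrite !preimage_setT => <- <-; apply: eq_measure_integral => A mA _.
change (pi (snd @^-1` A) = P (f2 @^-1` A)).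
rewrite -pi_coupling.2 //; congr (pi _).
by apply/seteqP; split => [yz|[y z] []].
Qed.

End marginals.

Section lipschitz.
Variables (h : p.-tuple R -> R) (L : R).
Hypotheses (mh : measurable_fun setT h) (h_ge0 : forall y, (0 <= h y)%R)
  (h_bounded : exists M, forall y, (h y <= M)%R) (L_ge0 : (0 <= L)%R)
  (h_lip : forall y z, (`|h y - h z| <= L * dist2 y z)%R).

Lemma lipschitz_le_coupling pi : is_coupling P f1 f2 pi ->
  `|\int[P]_x (h (f1 x))%:E - \int[P]_x (h (f2 x))%:E| <=
  L%:E * \int[pi]_yz (dist2 yz.1 yz.2)%:E.
Proof.
move=> pi_coupling; have [M hM] := h_bounded.
have mEh : measurable_fun setT (EFin \o h) by exact/measurable_EFinP.
have Eh_ge0 y : 0 <= (EFin \o h) y by rewrite lee_fin.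
rewrite -(coupling_integral_fst _ pi_coupling mEh Eh_ge0).
rewrite -(coupling_integral_snd _ pi_coupling mEh Eh_ge0) /=.
have hbound y : (`|h y| <= M)%R by rewrite ger0_norm.
have m1 : measurable_fun setT (fun yz : p.-tuple R * p.-tuple R => h yz.1).
  exact: measurableT_comp mh measurable_fst.
have m2 : measurable_fun setT (fun yz : p.-tuple R * p.-tuple R => h yz.2).
  exact: measurableT_comp mh measurable_snd.
rewrite -integralB_EFin //; last 2 first.
- exact: (bounded_integrable _ _ M m1).
- exact: (bounded_integrable _ _ M m2).
have mdist : measurable_fun setT (fun yz : p.-tuple R * p.-tuple R => dist2 yz.1 yz.2).
  exact: measurable_dist2 measurable_fst measurable_snd.
apply: le_trans (le_abse_integral _ _ _) _ => //.
  by apply/measurable_EFinP; exact: measurable_funB.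
rewrite -ge0_integralZl_EFin //; first last.
- by apply/measurable_EFinP; exact: mdist.
- by move=> yz _; rewrite lee_fin dist2_ge0.
apply: ge0_le_integral => //.
- by apply: measurableT_comp => //; apply/measurable_EFinP; exact: measurable_funB.
- by apply: measurable_funeM; apply/measurable_EFinP; exact: mdist.
- by move=> yz _; rewrite -EFinB -EFinM /= lee_fin h_lip.
Qed.

Lemma lipschitz_le_W1 :
  `|\int[P]_x (h (f1 x))%:E - \int[P]_x (h (f2 x))%:E| <= L%:E * W1 P f1 f2.
Proof.
have [L_eq0|L_neq0] := eqVneq L 0%R.
  have hf12 x : h (f1 x) = h (f2 x).
    apply/eqP; rewrite -subr_eq0 -normr_eq0 eq_le normr_ge0 andbT.
    by rewrite (le_trans (h_lip _ _)) // L_eq0 mul0r.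
  have [M hM] := h_bounded.
  have hfin : \int[P]_x (h (f2 x))%:E \is a fin_num.
    apply: integrable_fin_num => //; apply: (bounded_integrable _ _ M).
      exact: measurableT_comp mh mf2.
    by move=> x; rewrite ger0_norm.
  under eq_integral do rewrite hf12.
  by rewrite subee // abse0 mule_ge0 // W1_ge0.
rewrite /W1 -ereal_inf_pZl ?lt0r ?L_neq0 //.
by apply: le_ereal_inf_tmp => _ [_ [pi pi_coupling <-] <-]; exact: lipschitz_le_coupling.
Qed.

End lipschitz.

Lemma sqdist_trunc_le_W1 c (t : R) : (0 <= t)%R ->
  `|\int[P]_x (sqdist_trunc c t (f1 x))%:E - \int[P]_x (sqdist_trunc c t (f2 x))%:E| <=
  (2 * t)%:E * W1 P f1 f2.
Proof.
move=> t_ge0; apply: lipschitz_le_W1.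
- exact: measurable_sqdist_trunc.
- exact: sqdist_trunc_ge0.
- by exists (t ^+ 2)%R => y; exact: sqdist_trunc_le.
- by rewrite mulr_ge0.
- by move=> y z; exact: sqdist_trunc_lipschitz.
Qed.

Lemma abs_MSE_sub_le_W1 c (s : R) : (forall x, norm2 (f1 x) <= s)%R ->
  (forall x, norm2 (f2 x) <= s)%R ->
  `|MSE P f1 c - MSE P f2 c| <= (2 * (s + norm2 c))%:E * W1 P f1 f2.
Proof.
move=> f1s f2s; have s_ge0 : (0 <= s)%R := le_trans (norm2_ge0 _) (f1s point).
have dist_le (y : p.-tuple R) : (norm2 y <= s)%R -> (dist2 y c <= s + norm2 c)%R.
  by move=> ys; apply: le_trans (dist2_le_norm2D _ _) _; rewrite lerD2r.
rewrite (MSE_sqdist_truncE P f1 c _ (fun x => dist_le _ (f1s x))).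
rewrite (MSE_sqdist_truncE P f2 c _ (fun x => dist_le _ (f2s x))).
by apply: sqdist_trunc_le_W1; rewrite addr_ge0 ?norm2_ge0.
Qed.

End coupling.

Section averaging.
Context {R : realType} {p : nat} {dX dY : measure_display}.
Context {X : measurableType dX} {Y : measurableType dY}.
Context (P : probability X R) (Q : probability Y R) (F : X -> Y -> p.-tuple R).
Hypothesis mF : measurable_fun setT (fun xg : X * Y => F xg.1 xg.2).
Hypothesis iF :
  (P \x Q)%E.-integrable setT (fun xg : X * Y => (norm2 (F xg.1 xg.2) ^+ 2)%:E).

(* The product measure gets its finite-measure structure only through this cast. *)
Let PQ : probability (X * Y)%type R := (P \x Q)%E.

Let sqdist c (xg : X * Y) := (dist2 (F xg.1 xg.2) c ^+ 2)%:E.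

Let measurable_sqdist c : measurable_fun setT (sqdist c).
Proof. by apply/measurable_EFinP; apply: measurable_funX; exact: measurable_dist2. Qed.

Let sqdist_ge0 c xg : (0 <= sqdist c xg)%E.
Proof. by rewrite lee_fin sqr_ge0. Qed.

Lemma measurable_fun_xsection g : measurable_fun setT (fun x => F x g).
Proof. exact: measurableT_comp mF (pair2_measurable g). Qed.

Lemma measurable_fun_ysection x : measurable_fun setT (F x).
Proof. exact: measurableT_comp mF (pair1_measurable x). Qed.

Lemma measurable_MSE_xsection c :
  measurable_fun setT (fun g => MSE P (fun x => F x g) c).
Proof. exact: (measurable_fun_fubini_tonelli_G _ (measurable_sqdist c) (sqdist_ge0 c)). Qed.

Lemma integral_MSE_xsection_fin_num c :
  (\int[Q]_g MSE P (fun x => F x g) c)%E \is a fin_num.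
Proof.
have := integrable_fin_num measurableT (integrable_sqr_dist2 (mu := PQ) mF iF c).
by rewrite (@fubini_tonelli2 _ _ _ _ _ P Q _ (measurable_sqdist c) (sqdist_ge0 c)).
Qed.

Let mean i x := \int[Q]_g tnth (F x g) i.

Let measurable_mean i : measurable_fun setT (mean i).
Proof.
have := measurable_fubini_F (integrable_tnth (mu := PQ) mF iF i).
exact: measurableT_comp (fine_measurable measurableT).
Qed.

Let measurable_trace_covm : measurable_fun setT (fun x => \tr (covm Q (F x))).
Proof.
rewrite /mxtrace; apply: measurable_sum => i.
under eq_fun do rewrite mxE !tnth_mktuple.
pose k (xg : X * Y) := (tnth (F xg.1 xg.2) i - mean i xg.1) *
                       (tnth (F xg.1 xg.2) i - mean i xg.1).
have mk : measurable_fun setT (EFin \o k).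
  apply/measurable_EFinP; apply: measurable_funM; apply: measurable_funB;
    solve [exact: measurable_tnth_fun | exact: measurableT_comp (measurable_mean i) measurable_fst].
have := @measurable_fun_fubini_tonelli_F _ _ _ _ _ Q _ mk
  (fun xg => ltac:(by rewrite /= lee_fin /k -expr2 sqr_ge0)).
exact: measurableT_comp (fine_measurable measurableT).
Qed.

Lemma MSE_meanv_add_trace c :
  (MSE P (fun x => meanv Q (F x)) c + \int[P]_x (\tr (covm Q (F x)))%:E =
   \int[Q]_g MSE P (fun x => F x g) c)%E.
Proof.
have mMSE : measurable_fun setT (fun x => dist2 (meanv Q (F x)) c ^+ 2).
  apply: measurable_funX; apply: measurable_dist2 => //.
  apply/measurable_fun_tnthP => i.
  rewrite (_ : _ \o _ = mean i); first exact: measurable_mean.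
  by apply/funext => x /=; rewrite tnth_mktuple.
rewrite /MSE -ge0_integralD //; first last.
- by apply/measurable_EFinP; exact: measurable_trace_covm.
- by move=> x _; rewrite lee_fin trace_covm_ge0.
- by apply/measurable_EFinP; exact: mMSE.
- by move=> x _; rewrite lee_fin sqr_ge0.
rewrite -(@fubini_tonelli _ _ _ _ _ P Q _ (measurable_sqdist c) (sqdist_ge0 c)).
apply: ae_eq_integral => //.
- by apply: emeasurable_funD; apply/measurable_EFinP; [exact: mMSE|exact: measurable_trace_covm].
- exact: (measurable_fun_fubini_tonelli_F _ (measurable_sqdist c) (sqdist_ge0 c)).
apply: filterS (ae_integrable1 iF) => x iFx _.
by rewrite -EFinD (bias_variance _ _ c (measurable_fun_ysection x) iFx).
Qed.

Section comparison.
Variable theta : X -> p.-tuple R.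
Hypothesis mtheta : measurable_fun setT theta.
Local Notation EW1 := (\int[Q]_g W1 P (fun x => F x g) theta)%E.

Lemma ae_MSE_xsection_eq c : EW1 = 0%E ->
  {ae Q, forall g, MSE P (fun x => F x g) c = MSE P theta c}.
Proof.
(* The MSEs may be infinite, so compare the bounded truncations and let n -> oo. *)
move=> EW1_eq0.
pose A n g := (\int[P]_x (sqdist_trunc c n%:R (F x g))%:E)%E.
pose B n := (\int[P]_x (sqdist_trunc c n%:R (theta x))%:E)%E.
have B_fin n : B n \is a fin_num.
  apply: integrable_fin_num => //; apply: (bounded_integrable _ _ (n%:R ^+ 2)).
    exact: measurableT_comp (measurable_sqdist_trunc _ _) mtheta.
  by move=> x; rewrite ger0_norm ?sqdist_trunc_ge0 ?sqdist_trunc_le.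
have AB n : {ae Q, forall g, setT g -> (A n g - B n)%E = cst 0%E g}.
  have mA : measurable_fun setT (A n).
    apply: (measurable_fun_fubini_tonelli_G
      (EFin \o (fun xg : X * Y => sqdist_trunc c n%:R (F xg.1 xg.2)))).
      by apply/measurable_EFinP; exact: measurableT_comp (measurable_sqdist_trunc _ _) mF.
    by move=> xg; rewrite lee_fin sqdist_trunc_ge0.
  have mAB : measurable_fun setT (fun g => A n g - B n)%E.
    by apply: emeasurable_funB => //; exact: measurable_cst.
  apply/(ae_eq_integral_abs Q measurableT mAB)/eqP.
  rewrite eq_le integral_ge0 ?andbT // -(mule0 (2 * n%:R)%:E) -EW1_eq0.
  apply: ge0_integral_le_scale => //; first exact: measurableT_comp.
  move=> g; apply: sqdist_trunc_le_W1 => //; exact: measurable_fun_xsection.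
apply: filterS (ae_foralln AB) => g ABg.
rewrite (MSE_limn _ _ _ (measurable_fun_xsection g)) (MSE_limn _ _ _ mtheta).
suff AgB : (fun n => A n g) = B by rewrite /A /B in AgB; rewrite AgB.
by apply/funext => n; rewrite -(subeK (A n g) (B_fin n)) (ABg n I) add0e.
Qed.

Lemma integral_MSE_xsection_eq c : EW1 = 0%E ->
  (\int[Q]_g MSE P (fun x => F x g) c = MSE P theta c)%E.
Proof.
move=> EW1_eq0; rewrite (ae_eq_integral (cst (MSE P theta c))) //.
- by rewrite integral_cst // [X in (_ * X)%E](probability_setT Q) mule1.
- exact: measurable_MSE_xsection.
- by apply: filterS (ae_MSE_xsection_eq c EW1_eq0) => g ->.
Qed.

Lemma abs_integral_MSE_xsection_sub_le c (s : R) :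
  (forall x g, norm2 (F x g) <= s) -> (forall x, norm2 (theta x) <= s) ->
  (`|\int[Q]_g MSE P (fun x => F x g) c - MSE P theta c| <=
   (2 * (s + norm2 c))%:E * EW1)%E.
Proof.
move=> Fs thetas.
have m0_fin : MSE P theta c \is a fin_num.
  apply: integrable_fin_num => //; apply: integrable_sqr_dist2 => //.
  apply: (bounded_integrable _ _ (s ^+ 2)).
    by apply: measurable_funX; under eq_fun do rewrite -dist2_0; exact: measurable_dist2.
  move=> x; rewrite ger0_norm ?sqr_ge0 // lerXn2r ?nnegrE ?norm2_ge0 //.
  exact: le_trans (norm2_ge0 _) (thetas x).
have iMSE : Q.-integrable setT (fun g => MSE P (fun x => F x g) c).
  have MSE_ge0 g : (0 <= MSE P (fun x => F x g) c)%E.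
    by apply: integral_ge0 => x _; rewrite lee_fin sqr_ge0.
  apply/integrableP; split; first exact: measurable_MSE_xsection.
  under eq_integral do rewrite gee0_abs //.
  by rewrite -ge0_fin_numE ?integral_MSE_xsection_fin_num // integral_ge0.
have -> : (\int[Q]_g MSE P (fun x => F x g) c - MSE P theta c =
           \int[Q]_g (MSE P (fun x => F x g) c - MSE P theta c))%E.
  have icst : Q.-integrable setT (cst (MSE P theta c)).
    by rewrite -(fineK m0_fin); exact: finite_measure_integrable_cst.
  rewrite (integralB measurableT iMSE icst) integral_cst //.
  by rewrite [X in (_ * X)%E](probability_setT Q) mule1.
apply: le_trans (le_abse_integral _ _ _) _ => //.
  by apply: emeasurable_funB => //; exact: measurable_MSE_xsection.
apply: ge0_integral_le_scale => //.
- by rewrite mulr_ge0 // addr_ge0 ?norm2_ge0 // (le_trans (norm2_ge0 _) (thetas point)).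
- by apply: measurableT_comp => //; apply: emeasurable_funB => //; exact: measurable_MSE_xsection.
- by move=> g; apply: abs_MSE_sub_le_W1 => //; exact: measurable_fun_xsection.
Qed.

End comparison.
End averaging.

Lemma norm2_le_supnorm {R : realType} {p : nat} {T : Type} (f : T -> p.-tuple R) x :
  ((norm2 (f x))%:E <= supnorm f)%E.
Proof. by apply: ereal_sup_ubound; exists x. Qed.

Theorem proposition6p3 (R : realType) (p : nat)
  (dX : measure_display) (X : measurableType dX) (P : probability X R)
  (G : ptopologicalType) (mul : G -> G -> G) (inv : G -> G) (one : G)
  (hG : topological_group mul inv one) (hcpt : compact [set: G])
  (Q : probability (borelT G) R) (hQ : haar_probability mul Q)
  (act : G -> X -> X) (hact : group_action mul one act)
  (theta : X -> p.-tuple R) (theta0 : p.-tuple R)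
  (htheta : measurable_fun [set: X] theta)
  (hL2m : measurable_fun [set: (X * borelT G)%type]
            (fun xg : X * borelT G => theta (act xg.2 xg.1)))
  (hL2i : (P \x Q)%E.-integrable [set: (X * borelT G)%type]
            (fun xg : X * borelT G => ((norm2 (theta (act xg.2 xg.1))) ^+ 2)%:E)) :
  let thetaG : X -> p.-tuple R :=
    fun x => meanv Q (fun g : borelT G => theta (act g x)) in
  let EW : \bar R :=
    (\int[Q]_g W1 P (fun x => theta (act g x)) theta)%E in
  (`| MSE P thetaG theta0 - MSE P theta theta0
      + \int[P]_x (\tr (covm Q (fun g : borelT G => theta (act g x))))%:E |
   <= EW * (EW + (2 * norm2 (bias P theta theta0))%:E + 4%:E * supnorm theta))%E.
Proof.
(* Only the joint measurability and square integrability of [theta (act g x)]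
   are used: the group structure, Haar invariance and action axioms are not. *)
cbv zeta; pose F x (g : borelT G) := theta (act g x).
set EW := (\int[Q]_g W1 P _ theta)%E.
rewrite addeAC (MSE_meanv_add_trace P Q F hL2m hL2i theta0).
have I_fin := integral_MSE_xsection_fin_num P Q F hL2m hL2i theta0.
have EW_ge0 : (0 <= EW)%E by apply: integral_ge0 => g _; exact: W1_ge0.
have [EW_eq0|EW_neq0] := eqVneq EW 0%E.
  have I_eq := integral_MSE_xsection_eq P Q F hL2m theta htheta theta0 EW_eq0.
  by rewrite I_eq in I_fin *; rewrite subee // abse0 EW_eq0 mul0e.
have EW_gt0 : (0 < EW)%E by rewrite lt0e EW_neq0.
have sup_ge0 : (0 <= supnorm theta)%E.
  by apply: le_trans (norm2_le_supnorm theta point); rewrite lee_fin norm2_ge0.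
case sup_eq : (supnorm theta) sup_ge0 => [s| |] // s_ge0; last first.
  rewrite mulry gtr0_sg // mul1e addey ?gt0_muley ?leey // gt_eqF //.
  by apply: lt_le_trans ltNy0 (adde_ge0 EW_ge0 _); rewrite lee_fin mulr_ge0 ?norm2_ge0.
have theta_le x : (norm2 (theta x) <= s)%R by rewrite -lee_fin -sup_eq norm2_le_supnorm.
apply: le_trans (abs_integral_MSE_xsection_sub_le P Q F hL2m hL2i theta htheta theta0 s
  (fun x g => theta_le (act g x)) theta_le) _.
rewrite -[X in (_ * X <= _)%E]/EW muleC; apply: (lee_wpmul2l EW_ge0).
rewrite -addeA -EFinM -EFinD; apply: lee_paddl EW_ge0 _; rewrite lee_fin.
have := norm2_le_bias_add P _ theta0 _ htheta theta_le; lra.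
Qed.
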